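(* Let $A$ and $\Lambda$ be as in the context and suppose $A^TA$ is singular. Let $d\ge 1$, $Q\in\mathbb R^{(m+1)\times d}$ (the matrix whose rows are the data points $\mathbf Q_0,\dots,\mathbf Q_m$), and let $P^{(0)}\in\mathbb R^{(n+1)\times d}$ be arbitrary. Define the sequence $$P^{(k+1)}=(I-\Lambda A^TA)P^{(k)}+\Lambda A^TQ,\qquad k=0,1,2,\dots,$$ where $I$ is the $(n+1)\times(n+1)$ identity. Then the sequence $(P^{(k)})_{k\ge 0}$ converges.
   Context: Let $n \le m$ be nonnegative integers. Let $B_0,\dots,B_n$ be real-valued basis functions (e.g. B-spline basis functions, tensor-product B-spline basis functions, or T-spline blending functions) that are nonnegative and form a partition of unity, i.e. $B_i(\mathbf t)\ge 0$ and $\sum_{i=0}^n B_i(\mathbf t)=1$ for every parameter $\mathbf t$. Let $\mathbf t_0,\dots,\mathbf t_m$ be parameter values assigned to data points $\mathbf Q_0,\dots,\mathbf Q_m$, and assume that for every $i$ there is some $j$ with $B_i(\mathbf t_j)\neq 0$. Let $A$ be the $(m+1)\times(n+1)$ matrix with entries $A_{ji}=B_i(\mathbf t_j)$. Let $\Lambda=\mathrm{diag}\big(1/\sum_{j=0}^m B_0(\mathbf t_j),\dots,1/\sum_{j=0}^m B_n(\mathbf t_j)\big)$, a diagonal matrix with positive diagonal entries. (This iteration is the LSPIA iteration for least-squares fitting.) *)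

(* real numbers from Stdlib Reals. Matrices are represented as
   functions nat -> nat -> R; only entries in the index ranges matter.
   sum_f_R0 f n = f 0 + ... + f n  (n+1 terms). *)
From Stdlib Require Import Reals.
Open Scope R_scope.

Definition Amat {T : Type} (B : nat -> T -> R) (t : nat -> T) (j i : nat) : R :=
  B i (t j).

(* Lambda_{ii} = 1 / sum_{j=0}^m B_i(t_j) *)
Definition lam {T : Type} (m : nat) (B : nat -> T -> R) (t : nat -> T) (i : nat) : R :=
  / sum_f_R0 (fun j => B i (t j)) m.

Definition AtA {T : Type} (m : nat) (B : nat -> T -> R) (t : nat -> T) (i l : nat) : R :=
  sum_f_R0 (fun j => Amat B t j i * Amat B t j l) m.

Definition sqmul (N : nat) (X Y : nat -> nat -> R) (i l : nat) : R :=
  sum_f_R0 (fun k => X i k * Y k l) N.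

Definition idm (i l : nat) : R := if Nat.eqb i l then 1 else 0.

Definition invertible (N : nat) (M : nat -> nat -> R) : Prop :=
  exists X : nat -> nat -> R,
    (forall i l, (i <= N)%nat -> (l <= N)%nat ->
       sqmul N M X i l = idm i l /\ sqmul N X M i l = idm i l).

Definition singular (N : nat) (M : nat -> nat -> R) : Prop := ~ invertible N M.

Definition lspia_step {T : Type} (n m : nat) (B : nat -> T -> R) (t : nat -> T)
    (Q P : nat -> nat -> R) : nat -> nat -> R :=
  fun i c =>
    sum_f_R0 (fun l => (idm i l - lam m B t i * AtA m B t i l) * P l c) n
    + lam m B t i * sum_f_R0 (fun j => Amat B t j i * Q j c) m.

Fixpoint lspia_seq {T : Type} (n m : nat) (B : nat -> T -> R) (t : nat -> T)
    (Q P0 : nat -> nat -> R) (k : nat) : nat -> nat -> R :=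
  match k with
  | O => P0
  | S k' => lspia_step n m B t Q (lspia_seq n m B t Q P0 k')
  end.

(* With weights w_i = sum_j B_i(t_j), Lambda = diag(1/w_i) and the weighted
   inner product <x, y>_w = sum_i w_i x_i y_i, the operator
   G = I - Lambda A^T A is self-adjoint with <x, G x>_w = <x, x>_w - |A x|^2,
   so G <= I; since the rows of Lambda A^T are probability vectors, Jensen's
   inequality gives G^2 <= G, hence also G >= 0.  Thus a_k = <x, G^k x>_w is
   nonnegative and nonincreasing, so it converges, and
   |G^k x - G^l x|_w^2 = a_(2k) - 2 a_(k+l) + a_(2l) makes (G^k x) Cauchy.
   The normal equations A^T A u = A^T Q are always solvable, because
   A^T A and A have the same row space; the error P^(k) - u obeys
   e^(k+1) = G e^(k), so P^(k) converges. *)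

From Stdlib Require Import Reals Lra Lia.
From mathcomp Require all_boot all_algebra Rstruct.
Open Scope R_scope.

Module NormalEquations.
Import all_boot all_algebra Rstruct.
Import GRing.Theory Num.Theory.
Local Open Scope ring_scope.

Section RealMatrix.
Context {F : realFieldType}.

Lemma mulmx_trmx_self_eq0 {r p} (V : 'M[F]_(r, p)) : V *m V^T = 0 -> V = 0.
Proof.
move=> /matrixP VVt; apply/matrixP => i j; rewrite mxE.
have := VVt i i; rewrite !mxE => sum_sq_eq0.
have /psumr_eq0P sq_eq0 : \sum_k V i k ^+ 2 = 0.
  by rewrite -[RHS]sum_sq_eq0; apply: eq_bigr => k _; rewrite mxE expr2.
by apply/eqP; rewrite -sqrf_eq0 sq_eq0 // => k _; apply: sqr_ge0.
Qed.

Lemma kermx_trmx_mul_sub {p q} (A : 'M[F]_(p, q)) :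
  (kermx (A^T *m A) <= kermx A^T)%MS.
Proof.
apply/sub_kermxP; apply: mulmx_trmx_self_eq0.
by rewrite trmx_mul trmxK mulmxA -(mulmxA _ A^T) mulmx_ker mul0mx.
Qed.

Lemma mxrank_trmx_mul {p q} (A : 'M[F]_(p, q)) : \rank (A^T *m A) = \rank A.
Proof.
have := mxrankS (kermx_trmx_mul_sub A).
rewrite !mxrank_ker mxrank_tr leq_sub2lE ?rank_leq_col // => rank_le.
by apply/eqP; rewrite eqn_leq mxrankM_maxr.
Qed.

Lemma submx_trmx_mul {p q} (A : 'M[F]_(p, q)) : (A <= A^T *m A)%MS.
Proof.
have [_ <-] := mxrank_leqif_sup (submxMl A^T A).
by rewrite mxrank_trmx_mul.
Qed.

Lemma normal_equations_pinvmx {r p q} (A : 'M[F]_(p, q)) (Y : 'M_(r, p)) :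
  Y *m A *m pinvmx (A^T *m A) *m (A^T *m A) = Y *m A.
Proof. by apply: mulmxKpV; apply: submx_trans (submxMl Y A) (submx_trmx_mul A). Qed.

End RealMatrix.

Lemma sum_f_R0_big (f : nat -> R) N : sum_f_R0 f N = \sum_(i < N.+1) f i.
Proof. by elim: N => [|N IH]; rewrite ?big_ord1 // big_ord_recr /= IH. Qed.

Definition normal_solution (n m : nat) (A : nat -> nat -> R) (q : nat -> R)
    (l : nat) : R :=
  let M := \matrix_(j < m.+1, i < n.+1) A j i in
  ((\row_j q j) *m M *m pinvmx (M^T *m M)) ord0 (inord l).

Lemma normal_solution_spec n m (A : nat -> nat -> R) (q : nat -> R) i :
  (i <= n)%coq_nat ->
  sum_f_R0 (fun l => Rmult (sum_f_R0 (fun j => Rmult (A j i) (A j l)) m)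
                           (normal_solution n m A q l)) n
  = sum_f_R0 (fun j => Rmult (A j i) (q j)) m.
Proof.
move=> /ssrnat.leP; rewrite -ltnS => lt_i.
set M := \matrix_(j < m.+1, i < n.+1) A j i.
have /matrixP/(_ ord0 (Ordinal lt_i)) := normal_equations_pinvmx M (\row_j q j).
rewrite !mxE => normal_eq.
rewrite !sum_f_R0_big.
transitivity (\sum_(j < m.+1) (\row_j q j) ord0 j * M j (Ordinal lt_i)); last first.
  by apply: eq_bigr => j _; rewrite !mxE RmultE mulrC.
rewrite -normal_eq; apply: eq_bigr => l _.
rewrite /normal_solution inord_val RmultE mulrC !mxE sum_f_R0_big.
by congr (_ * _); apply: eq_bigr => j _; rewrite !mxE RmultE mulrC.
Qed.

End NormalEquations.

Lemma sum_f_R0_mult_l (c : R) (f : nat -> R) N :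
  sum_f_R0 (fun i => c * f i) N = c * sum_f_R0 f N.
Proof. rewrite scal_sum. apply sum_eq. intros; ring. Qed.

Lemma sum_f_R0_mult_r (c : R) (f : nat -> R) N :
  sum_f_R0 (fun i => f i * c) N = sum_f_R0 f N * c.
Proof. rewrite Rmult_comm, scal_sum. reflexivity. Qed.

Lemma sum_f_R0_nonneg (f : nat -> R) N :
  (forall i, (i <= N)%nat -> 0 <= f i) -> 0 <= sum_f_R0 f N.
Proof.
  induction N as [|N IH]; intros Hf; simpl.
  - apply Hf; lia.
  - apply Rplus_le_le_0_compat; [apply IH; intros; apply Hf|apply Hf]; lia.
Qed.

Lemma sum_f_R0_ge_term (f : nat -> R) N k :
  (forall i, (i <= N)%nat -> 0 <= f i) -> (k <= N)%nat -> f k <= sum_f_R0 f N.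
Proof.
  induction N as [|N IH]; intros Hf Hk; simpl.
  - replace k with 0%nat by lia; lra.
  - destruct (Nat.eq_dec k (S N)) as [->|Hne].
    + assert (0 <= sum_f_R0 f N) by (apply sum_f_R0_nonneg; intros; apply Hf; lia).
      lra.
    + assert (f k <= sum_f_R0 f N) by (apply IH; [intros; apply Hf|]; lia).
      assert (0 <= f (S N)) by (apply Hf; lia).
      lra.
Qed.

Lemma sum_f_R0_swap (f : nat -> nat -> R) N M :
  sum_f_R0 (fun i => sum_f_R0 (fun j => f i j) M) N
  = sum_f_R0 (fun j => sum_f_R0 (fun i => f i j) N) M.
Proof.
  induction N as [|N IH]; simpl; [reflexivity|].
  rewrite IH, <- plus_sum. reflexivity.
Qed.

Lemma sum_f_R0_idm (v : nat -> R) N i :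
  (i <= N)%nat -> sum_f_R0 (fun l => idm i l * v l) N = v i.
Proof.
  unfold idm. induction N as [|N IH]; intros Hi; simpl.
  - replace i with 0%nat by lia. simpl. ring.
  - destruct (Nat.eqb_spec i (S N)) as [->|Hne].
    + rewrite (sum_eq _ (fun _ => 0)), sum_cte by
        (intros l Hl; destruct (Nat.eqb_spec (S N) l); [lia|ring]).
      ring.
    + rewrite IH by lia. ring.
Qed.

Lemma jensen_sq (a x : nat -> R) N :
  (forall i, (i <= N)%nat -> 0 <= a i) -> sum_f_R0 a N = 1 ->
  sum_f_R0 (fun i => a i * x i) N * sum_f_R0 (fun i => a i * x i) N
  <= sum_f_R0 (fun i => a i * x i * x i) N.
Proof.
  intros Ha Hsum. set (s := sum_f_R0 (fun i => a i * x i) N).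
  assert (Hvar : 0 <= sum_f_R0 (fun i => a i * ((x i - s) * (x i - s))) N).
  { apply sum_f_R0_nonneg. intros i Hi.
    apply Rmult_le_pos; [apply Ha, Hi|apply Rle_0_sqr]. }
  rewrite (sum_eq _ (fun i => a i * x i * x i + (-2 * s * (a i * x i) + s * s * a i)))
    in Hvar by (intros; ring).
  rewrite !plus_sum, !sum_f_R0_mult_l, Hsum in Hvar. fold s in Hvar.
  lra.
Qed.

Definition wdot (N : nat) (w x y : nat -> R) : R :=
  sum_f_R0 (fun i => w i * x i * y i) N.

Section WeightedDot.
Variables (N : nat) (w : nat -> R).
Hypothesis w_pos : forall i, (i <= N)%nat -> 0 < w i.

Lemma wdot_sym x y : wdot N w x y = wdot N w y x.
Proof. apply sum_eq. intros; ring. Qed.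

Lemma wdot_sub_r x y z :
  wdot N w x (fun i => y i - z i) = wdot N w x y - wdot N w x z.
Proof. unfold wdot. rewrite <- minus_sum. apply sum_eq. intros; ring. Qed.

Lemma wdot_sub_sub x y :
  wdot N w (fun i => x i - y i) (fun i => x i - y i)
  = wdot N w x x - 2 * wdot N w x y + wdot N w y y.
Proof.
  unfold wdot. rewrite <- sum_f_R0_mult_l, <- minus_sum, <- plus_sum.
  apply sum_eq. intros; ring.
Qed.

Lemma wdot_term_nonneg x i : (i <= N)%nat -> 0 <= w i * x i * x i.
Proof.
  intros Hi. rewrite Rmult_assoc.
  apply Rmult_le_pos; [apply Rlt_le, w_pos, Hi|apply Rle_0_sqr].
Qed.

Lemma wdot_coord_le x i :
  (i <= N)%nat -> w i * x i * x i <= wdot N w x x.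
Proof.
  apply (sum_f_R0_ge_term (fun i => w i * x i * x i)), wdot_term_nonneg.
Qed.

Lemma wdot_self_nonneg x : 0 <= wdot N w x x.
Proof. apply sum_f_R0_nonneg, wdot_term_nonneg. Qed.

End WeightedDot.

(* Only these inequalities are used; [G] need not be linear. *)
Section ContractionIterates.
Variables (N : nat) (w : nat -> R) (G : (nat -> R) -> nat -> R).
Hypothesis w_pos : forall i, (i <= N)%nat -> 0 < w i.
Hypothesis G_sym : forall x y, wdot N w (G x) y = wdot N w x (G y).
Hypothesis G_le_id : forall x, wdot N w x (G x) <= wdot N w x x.
Hypothesis G_sq_le : forall x, wdot N w (G x) (G x) <= wdot N w x (G x).

Definition energy (x : nat -> R) (k : nat) : R := wdot N w x (Nat.iter k G x).

Lemma wdot_iter x i j :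
  wdot N w (Nat.iter i G x) (Nat.iter j G x) = energy x (i + j).
Proof.
  revert j. induction i as [|i IH]; intros j; [reflexivity|].
  rewrite Nat.iter_succ, G_sym, <- Nat.iter_succ, IH.
  f_equal. lia.
Qed.

Lemma energy_decreasing x : Un_decreasing (energy x).
Proof.
  intros k. destruct (Nat.Even_or_Odd k) as [[p ->]|[p ->]].
  - replace (S (2 * p)) with (p + S p)%nat by lia.
    replace (2 * p)%nat with (p + p)%nat by lia.
    rewrite <- !wdot_iter, Nat.iter_succ. apply G_le_id.
  - replace (S (2 * p + 1)) with (S p + S p)%nat by lia.
    replace (2 * p + 1)%nat with (p + S p)%nat by lia.
    rewrite <- !wdot_iter, Nat.iter_succ. apply G_sq_le.
Qed.

Lemma energy_nonneg x k : 0 <= energy x k.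
Proof.
  destruct (Nat.Even_or_Odd k) as [[p ->]|[p ->]].
  - replace (2 * p)%nat with (p + p)%nat by lia.
    rewrite <- wdot_iter. apply wdot_self_nonneg, w_pos.
  - replace (2 * p + 1)%nat with (p + S p)%nat by lia.
    rewrite <- wdot_iter, Nat.iter_succ.
    eapply Rle_trans; [apply wdot_self_nonneg, w_pos|apply G_sq_le].
Qed.

Lemma energy_cv x : {a | Un_cv (energy x) a}.
Proof.
  apply decreasing_cv; [apply energy_decreasing|].
  exists 0. intros y [k ->]. unfold opp_seq. pose proof (energy_nonneg x k). lra.
Qed.

Lemma iter_cauchy x i :
  (i <= N)%nat -> Cauchy_crit (fun k => Nat.iter k G x i).
Proof.
  intros Hi eps Heps. destruct (energy_cv x) as [a Ha].
  pose proof (w_pos i Hi) as Hwi.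
  assert (Hdelta : 0 < eps * eps * w i / 4) by
    (apply Rmult_lt_0_compat; [apply Rmult_lt_0_compat; nra|lra]).
  destruct (Ha _ Hdelta) as [K HK]. exists K. intros k l Hk Hl.
  pose proof (HK (k + k)%nat ltac:(lia)) as Hkk.
  pose proof (HK (k + l)%nat ltac:(lia)) as Hkl.
  pose proof (HK (l + l)%nat ltac:(lia)) as Hll.
  unfold R_dist in *.
  apply Rabs_def2 in Hkk. apply Rabs_def2 in Hkl. apply Rabs_def2 in Hll.
  pose proof (wdot_coord_le N w w_pos
                (fun j => Nat.iter k G x j - Nat.iter l G x j) i Hi) as Hcoord.
  rewrite wdot_sub_sub, !wdot_iter in Hcoord.
  set (diff := Nat.iter k G x i - Nat.iter l G x i) in *.
  assert (Hsq : diff * diff < eps * eps).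
  { apply (Rmult_lt_reg_l (w i)); [exact Hwi|]. lra. }
  apply Rabs_def1; nra.
Qed.

End ContractionIterates.

Lemma coordwise_limits (u : nat -> nat -> nat -> R) (N : nat) :
  (forall i c, (i <= N)%nat -> {l | Un_cv (fun k => u k i c) l}) ->
  exists L : nat -> nat -> R,
    forall i c, (i <= N)%nat -> Un_cv (fun k => u k i c) (L i c).
Proof.
  intros Hlim.
  exists (fun i c => match Compare_dec.le_dec i N with
                     | left Hi => proj1_sig (Hlim i c Hi)
                     | right _ => 0
                     end).
  intros i c Hi. destruct (Compare_dec.le_dec i N) as [Hi'|]; [|lia].
  exact (proj2_sig (Hlim i c Hi')).
Qed.

Section LSPIA.
Variables (T : Type) (n m : nat) (B : nat -> T -> R) (t : nat -> T).
Hypothesis B_nonneg : forall (i : nat) (x : T), (i <= n)%nat -> 0 <= B i x.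
Hypothesis B_sum1 : forall x : T, sum_f_R0 (fun i => B i x) n = 1.
Hypothesis B_supp :
  forall i : nat, (i <= n)%nat -> exists j : nat, (j <= m)%nat /\ B i (t j) <> 0.

Definition weight (i : nat) : R := sum_f_R0 (fun j => B i (t j)) m.

Lemma weight_pos i : (i <= n)%nat -> 0 < weight i.
Proof.
  intros Hi. destruct (B_supp i Hi) as [j [Hj Hne]].
  assert (B i (t j) <= weight i).
  { apply (sum_f_R0_ge_term (fun j => B i (t j))); auto. }
  assert (0 <= B i (t j)) by auto.
  lra.
Qed.

Lemma lam_weight i : (i <= n)%nat -> lam m B t i * weight i = 1.
Proof. intros Hi. apply Rinv_l. pose proof (weight_pos i Hi). lra. Qed.

(* [evalA] is v |-> A v and [adjA] is y |-> Lambda A^T y. *)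
Definition evalA (v : nat -> R) (j : nat) : R :=
  sum_f_R0 (fun i => B i (t j) * v i) n.

Definition adjA (y : nat -> R) (i : nat) : R :=
  lam m B t i * sum_f_R0 (fun j => B i (t j) * y j) m.

Definition dot (y z : nat -> R) : R := sum_f_R0 (fun j => y j * z j) m.

Lemma wdot_adjA x y : wdot n weight x (adjA y) = dot (evalA x) y.
Proof.
  unfold wdot, adjA, dot, evalA.
  rewrite (sum_eq _ (fun i => sum_f_R0 (fun j => B i (t j) * x i * y j) m)).
  - rewrite sum_f_R0_swap. apply sum_eq. intros j _.
    rewrite <- sum_f_R0_mult_r. apply sum_eq. intros; ring.
  - intros i Hi.
    transitivity (lam m B t i * weight i
                  * (x i * sum_f_R0 (fun j => B i (t j) * y j) m)); [ring|].
    rewrite lam_weight, Rmult_1_l, <- sum_f_R0_mult_l by exact Hi.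
    apply sum_eq. intros; ring.
Qed.

Lemma weight_adjA_sq_le y i : (i <= n)%nat ->
  weight i * adjA y i * adjA y i <= sum_f_R0 (fun j => B i (t j) * y j * y j) m.
Proof.
  intros Hi. pose proof (lam_weight i Hi) as Hlw. pose proof (weight_pos i Hi).
  assert (Hlam : 0 <= lam m B t i) by (apply Rlt_le, Rinv_0_lt_compat; assumption).
  set (S2 := sum_f_R0 (fun j => B i (t j) * y j * y j) m).
  assert (Hjensen : adjA y i * adjA y i <= lam m B t i * S2).
  { assert (Hadj : adjA y i = sum_f_R0 (fun j => lam m B t i * B i (t j) * y j) m)
      by (unfold adjA; rewrite <- sum_f_R0_mult_l; apply sum_eq; intros; ring).
    assert (HS2 : lam m B t i * S2
                  = sum_f_R0 (fun j => lam m B t i * B i (t j) * y j * y j) m)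
      by (unfold S2; rewrite <- sum_f_R0_mult_l; apply sum_eq; intros; ring).
    rewrite Hadj, HS2.
    apply jensen_sq.
    - intros j _. apply Rmult_le_pos; [exact Hlam|apply B_nonneg, Hi].
    - rewrite sum_f_R0_mult_l. exact Hlw. }
  apply Rle_trans with (weight i * (lam m B t i * S2)).
  - rewrite Rmult_assoc. apply Rmult_le_compat_l; lra.
  - rewrite <- Rmult_assoc, (Rmult_comm (weight i)), Hlw. lra.
Qed.

Lemma wdot_adjA_le y : wdot n weight (adjA y) (adjA y) <= dot y y.
Proof.
  apply Rle_trans with
    (sum_f_R0 (fun i => sum_f_R0 (fun j => B i (t j) * y j * y j) m) n).
  - apply sum_Rle. intros i Hi. apply weight_adjA_sq_le, Hi.
  - rewrite sum_f_R0_swap. apply Req_le, sum_eq. intros j _.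
    rewrite (sum_eq _ (fun i => B i (t j) * (y j * y j))) by (intros; ring).
    rewrite sum_f_R0_mult_r, B_sum1. ring.
Qed.

Definition homog_step (v : nat -> R) (i : nat) : R := v i - adjA (evalA v) i.

Lemma wdot_homog_step x y :
  wdot n weight x (homog_step y) = wdot n weight x y - dot (evalA x) (evalA y).
Proof. unfold homog_step. rewrite wdot_sub_r, wdot_adjA. reflexivity. Qed.

Lemma homog_step_sym x y :
  wdot n weight (homog_step x) y = wdot n weight x (homog_step y).
Proof.
  rewrite wdot_sym, !wdot_homog_step, wdot_sym.
  unfold dot. f_equal. apply sum_eq. intros; ring.
Qed.

Lemma homog_step_le_id x : wdot n weight x (homog_step x) <= wdot n weight x x.
Proof.
  rewrite wdot_homog_step.
  assert (0 <= dot (evalA x) (evalA x)) by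
    (apply sum_f_R0_nonneg; intros; apply Rle_0_sqr).
  lra.
Qed.

Lemma homog_step_sq_le x :
  wdot n weight (homog_step x) (homog_step x) <= wdot n weight x (homog_step x).
Proof.
  unfold homog_step at 1 2. rewrite wdot_sub_sub, wdot_homog_step, wdot_adjA.
  pose proof (wdot_adjA_le (evalA x)). lra.
Qed.

Lemma adjA_evalA v i :
  adjA (evalA v) i = lam m B t i * sum_f_R0 (fun l => AtA m B t i l * v l) n.
Proof.
  unfold adjA, evalA, AtA, Amat. f_equal.
  rewrite (sum_eq _ (fun j => sum_f_R0 (fun l => B i (t j) * B l (t j) * v l) n)).
  - rewrite sum_f_R0_swap. apply sum_eq. intros l _.
    rewrite <- sum_f_R0_mult_r. apply sum_eq. intros; ring.
  - intros j _. rewrite <- sum_f_R0_mult_l. apply sum_eq. intros; ring.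
Qed.

Lemma homog_step_add u e v i :
  (forall l, (l <= n)%nat -> v l = u l + e l) -> (i <= n)%nat ->
  homog_step v i = homog_step u i + homog_step e i.
Proof.
  intros Hv Hi. unfold homog_step. rewrite !adjA_evalA, (Hv i Hi).
  rewrite (sum_eq _ (fun l => AtA m B t i l * u l + AtA m B t i l * e l))
    by (intros l Hl; rewrite (Hv l Hl); ring).
  rewrite plus_sum. ring.
Qed.

Lemma lspia_step_eq Q P c i : (i <= n)%nat ->
  lspia_step n m B t Q P i c
  = homog_step (fun l => P l c) i + adjA (fun j => Q j c) i.
Proof.
  intros Hi. unfold lspia_step, homog_step. rewrite adjA_evalA. unfold adjA.
  rewrite (sum_eq _ (fun l => idm i l * P l c
                              + - lam m B t i * (AtA m B t i l * P l c)))
    by (intros; ring).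
  rewrite plus_sum, sum_f_R0_mult_l, sum_f_R0_idm by exact Hi.
  unfold Amat. ring.
Qed.

Definition lsq_solution (Q : nat -> nat -> R) (c : nat) : nat -> R :=
  NormalEquations.normal_solution n m (Amat B t) (fun j => Q j c).

Lemma homog_step_lsq_solution Q c i : (i <= n)%nat ->
  homog_step (lsq_solution Q c) i + adjA (fun j => Q j c) i = lsq_solution Q c i.
Proof.
  intros Hi. unfold homog_step. rewrite adjA_evalA. unfold adjA, AtA, lsq_solution.
  rewrite (NormalEquations.normal_solution_spec n m (Amat B t) _ i Hi).
  unfold Amat. ring.
Qed.

Lemma lspia_seq_eq Q P0 c k i : (i <= n)%nat ->
  lspia_seq n m B t Q P0 k i c
  = lsq_solution Q c i
    + Nat.iter k homog_step (fun l => P0 l c - lsq_solution Q c l) i.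
Proof.
  revert i. induction k as [|k IH]; intros i Hi; simpl; [ring|].
  rewrite lspia_step_eq, (homog_step_add (lsq_solution Q c)
    (Nat.iter k homog_step (fun l => P0 l c - lsq_solution Q c l))) by assumption.
  rewrite <- (homog_step_lsq_solution Q c i Hi). ring.
Qed.

Lemma lspia_coord_limit Q P0 i c : (i <= n)%nat ->
  {l | Un_cv (fun k => lspia_seq n m B t Q P0 k i c) l}.
Proof.
  intros Hi. set (e0 := fun l => P0 l c - lsq_solution Q c l).
  destruct (R_complete _ (iter_cauchy n weight homog_step weight_pos homog_step_sym
                            homog_step_le_id homog_step_sq_le e0 i Hi)) as [e He].
  exists (lsq_solution Q c i + e). intros eps Heps.
  destruct (He eps Heps) as [K HK]. exists K. intros k Hk.
  rewrite lspia_seq_eq by exact Hi. fold e0. unfold R_dist in *.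
  replace (lsq_solution Q c i + Nat.iter k homog_step e0 i - (lsq_solution Q c i + e))
    with (Nat.iter k homog_step e0 i - e) by ring.
  apply HK, Hk.
Qed.

End LSPIA.

Theorem theorem1 (T : Type) (n m d : nat) (B : nat -> T -> R) (t : nat -> T)
  (Q P0 : nat -> nat -> R)
  (Hnm : (n <= m)%nat)
  (Hnonneg : forall (i : nat) (x : T), (i <= n)%nat -> 0 <= B i x)
  (Hpu : forall x : T, sum_f_R0 (fun i => B i x) n = 1)
  (Hsupp : forall i : nat, (i <= n)%nat -> exists j : nat, (j <= m)%nat /\ B i (t j) <> 0)
  (Hsing : singular n (AtA m B t))
  (Hd : (1 <= d)%nat) :
  exists L : nat -> nat -> R,
    forall i c : nat, (i <= n)%nat -> (c < d)%nat ->
      Un_cv (fun k => lspia_seq n m B t Q P0 k i c) (L i c).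
Proof.
  destruct (coordwise_limits (lspia_seq n m B t Q P0) n
              (fun i c Hi => lspia_coord_limit T n m B t Hnonneg Hpu Hsupp Q P0 i c Hi))
    as [L HL].
  exists L. intros i c Hi _. exact (HL i c Hi).
Qed.
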